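(* Let $\mathcal D$ be a distribution on $\mathcal X^k\times\mathbb R$, and let $\mathcal X=\mathcal X_{seen}\sqcup\mathcal X_{uns}$ where $\mathcal X_{seen}$ is the smallest set with $x\in\mathcal X_{seen}^k$ almost surely for $(x,y)\sim\mathcal D$. For any number of SGD steps $t$ and any step sizes $\eta_1,\dots,\eta_t>0$, and any $x_1,x_2\in\mathcal X_{uns}^k$, $$\mathbb E_{\theta^t}[f_{\mathrm{MLP}}(x_1;\theta^t)]=\mathbb E_{\theta^t}[f_{\mathrm{MLP}}(x_2;\theta^t)]$$ (indeed $f_{\mathrm{MLP}}(x_1;\theta^t)$ and $f_{\mathrm{MLP}}(x_2;\theta^t)$ have the same distribution), whenever these expectations exist.
   Context: $\mathcal X$ is a finite token alphabet with $m=|\mathcal X|$. The MLP with depth $L$, width $d$ and differentiable activation $\phi$ has weights $\theta=\{W_1,\dots,W_L,w\}$ with $W_1\in\mathbb R^{d\times km}$, $W_\ell\in\mathbb R^{d\times d}$ ($\ell\ge2$), $w\in\mathbb R^d$, and outputs $f_{\mathrm{MLP}}(x;\theta)=w^Tz_L(x;\theta)$ where $z_0(x)=(e_{x_1},\dots,e_{x_k})\in\mathbb R^{km}$ (concatenated one-hot encodings) and $z_\ell(x;\theta)=\phi(W_\ell z_{\ell-1}(x;\theta))$ elementwise for $\ell\ge1$. One-pass SGD: $\theta^0$ has independent Gaussian entries, i.i.d. within each of $W_1^0,\dots,W_L^0,w^0$; then $\theta^s=\theta^{s-1}-\eta_s\nabla_\theta(f_{\mathrm{MLP}}(x^s;\theta)-y^s)^2|_{\theta=\theta^{s-1}}$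 with fresh independent samples $(x^s,y^s)\sim\mathcal D$. *)

From HB Require Import structures.
From mathcomp Require Import all_boot all_order all_algebra.
From mathcomp Require Import all_classical all_reals all_analysis.
Set Implicit Arguments. Unset Strict Implicit. Unset Printing Implicit Defensive.
Import Order.TTheory GRing.Theory Num.Theory.
Local Open Scope ring_scope.
Local Open Scope classical_set_scope.

(** Token alphabet: a finite type [X] (so m = #|X|), with a witness [x0]
    (used only to equip the input space with a pointed/measurable structure).
    Inputs x in X^k are finite functions 'I_k -> X. *)
Definition inp (X : finType) (x0 : X) (k : nat) : Type := {ffun 'I_k -> X}.
HB.instance Definition _ (X : finType) (x0 : X) k := Finite.on (inp x0 k).
HB.instance Definition _ (X : finType) (x0 : X) k :=
  isPointed.Build (inp x0 k) [ffun=> x0].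
HB.instance Definition _ (X : finType) (x0 : X) k :=
  @isMeasurable.Build default_measure_display (inp x0 k) discrete_measurable
   discrete_measurable0 discrete_measurableC discrete_measurableU.

(** Index type of the parameters theta = {W_1, W_2..W_L, w}:
    - inl (inl (j, (i, a))) : entry (j, (i,a)) of W_1 in R^{d x km}, the column
      (i,a) being the position of coordinate a of the one-hot block e_{x_i};
    - inl (inr (l, (j, j'))) : entry (j, j') of W_{l+2}, l : 'I_(L-1);
    - inr j : entry j of w. *)
Definition pidx (X : finType) (k d L : nat) : finType :=
  (('I_d * ('I_k * X)) + ('I_L.-1 * ('I_d * 'I_d)) + 'I_d)%type.

Section MLP.
Variables (R : realType) (X : finType) (x0 : X) (k d L : nat) (phi : R -> R).
Notation P := (pidx X k d L).
Notation param := (P -> R).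

(** z_0(x) = (e_{x_1},...,e_{x_k}) in R^{km}. *)
Definition z0 (x : inp x0 k) (c : 'I_k * X) : R := ((x c.1 == c.2) : nat)%:R.

(** zh theta x n = z_{n+1}(x; theta). *)
Fixpoint zh (theta : param) (x : inp x0 k) (n : nat) : 'I_d -> R :=
  match n with
  | 0 => fun j => phi (\sum_(c : 'I_k * X) theta (inl (inl (j, c))) * z0 x c)
  | n'.+1 => fun j =>
      match (insub n' : option 'I_L.-1) with
      | Some l => phi (\sum_(j' : 'I_d) theta (inl (inr (l, (j, j')))) * zh theta x n' j')
      | None => 0
      end
  end.

Definition f_mlp (theta : param) (x : inp x0 k) : R :=
  \sum_(j : 'I_d) theta (inr j) * zh theta x L.-1 j.

Definition sqloss (z : inp x0 k * R) (theta : param) : R :=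
  (f_mlp theta z.1 - z.2) ^+ 2.

Definition grad (F : param -> R) (theta : param) (p : P) : R :=
  derive1 (fun s : R => F (fun q => theta q + (if q == p then s else 0))) 0.

Fixpoint sgd (theta0 : param) (eta : nat -> R) (smp : nat -> inp x0 k * R)
  (n : nat) : param :=
  match n with
  | 0 => theta0
  | n'.+1 => let th := sgd theta0 eta smp n' in
      fun p => th p - eta n * grad (sqloss (smp n)) th p
  end.

(** Per-block parameter of the Gaussian initialisation (i.i.d. within each
    of W_1, W_2, ..., W_L, w). *)
Definition blockwise (a1 : R) (ah : 'I_L.-1 -> R) (aw : R) (p : P) : R :=
  match p with
  | inl (inl _) => a1
  | inl (inr (l, _)) => ah l
  | inr _ => aw
  end.

End MLP.

(** X_seen: the smallest S with x in S^k almost surely (intersection of all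
    such S; the family is closed under intersection since X is finite). *)
Definition seen (R : realType) (X : finType) (x0 : X) (k : nat)
  (D : probability (inp x0 k * R)%type R) : {set X} :=
  [set a : X | [forall S : {set X},
     (D [set z : inp x0 k * R | forall i, z.1 i \in S] == 1%E) ==> (a \in S)]].

From HB Require Import structures.
From mathcomp Require Import all_boot all_order all_algebra perm.
From mathcomp Require Import all_classical all_reals all_analysis measurable_realfun.
Set Implicit Arguments.
Unset Strict Implicit.
Unset Printing Implicit Defensive.

Import Order.TTheory GRing.Theory Num.Theory numFieldNormedType.Exports.
Local Open Scope ring_scope.
Local Open Scope classical_set_scope.

(* At every position i, the transposition of the tokens x1 i and x2 i acts on
   inputs and, by permuting the columns of W_1, on parameters, so that
   f(theta o sigma, x) = f(theta, swap x) and swap x2 = x1.  The training inputs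
   almost surely use seen tokens only, which the swap fixes; hence each gradient
   step commutes with sigma and SGD started at theta0 o sigma ends at
   theta^t o sigma.  Since sigma only permutes entries of W_1, which are i.i.d.,
   (theta0 o sigma, samples) has the same law as (theta0, samples).  Therefore
   f(x1; theta^t) = F(theta0 o sigma, samples) has the law of
   F(theta0, samples) = f(x2; theta^t), where F runs SGD and evaluates at x2. *)

Section InputSwap.
Variables (R : realType) (X : finType) (x0 : X) (k d L : nat) (phi : R -> R).
Variables (x1 x2 : inp x0 k).
Notation P := (pidx X k d L).

Definition swap_input (x : inp x0 k) : inp x0 k :=
  [ffun i => tperm (x1 i) (x2 i) (x i)].

Definition swap_column (c : 'I_k * X) : 'I_k * X :=
  (c.1, tperm (x1 c.1) (x2 c.1) c.2).

Definition swap_param (p : P) : P :=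
  if p is inl (inl (j, c)) then inl (inl (j, swap_column c)) else p.

Lemma swap_columnK : involutive swap_column.
Proof. by case=> i a; rewrite /swap_column /= tpermK. Qed.

Lemma swap_paramK : involutive swap_param.
Proof. by case=> [[[j c]|//]|//] /=; rewrite swap_columnK. Qed.

Lemma swap_input_x2 : swap_input x2 = x1.
Proof. by apply/ffunP => i; rewrite ffunE tpermR. Qed.

Lemma swap_input_id (x : inp x0 k) :
  (forall i, x1 i != x i) -> (forall i, x2 i != x i) -> swap_input x = x.
Proof. by move=> x1x x2x; apply/ffunP => i; rewrite ffunE tpermD. Qed.

Lemma blockwise_swap_param (a : R) (b : 'I_L.-1 -> R) (c : R) (p : P) :
  blockwise a b c (swap_param p) = blockwise a b c p.
Proof. by case: p => [[[j [i a']]|[l jj]]|j]. Qed.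

Lemma z0_swap (x : inp x0 k) (c : 'I_k * X) :
  z0 R (swap_input x) (swap_column c) = z0 R x c.
Proof. by case: c => i a; rewrite /z0 /swap_column /= ffunE (inj_eq perm_inj). Qed.

Lemma zh_swap_param (theta : P -> R) (x : inp x0 k) n j :
  zh phi (theta \o swap_param) x n j = zh phi theta (swap_input x) n j.
Proof.
elim: n j => [|n IH] j /=.
  congr (phi _); rewrite [RHS](reindex_inj (can_inj swap_columnK)) /=.
  by apply: eq_bigr => c _; rewrite z0_swap.
case: (insub n) => [l|//]; congr (phi _).
by apply: eq_bigr => j' _; rewrite IH.
Qed.

Lemma f_mlp_swap_param (theta : P -> R) (x : inp x0 k) :
  f_mlp phi (theta \o swap_param) x = f_mlp phi theta (swap_input x).
Proof. by apply: eq_bigr => j _; rewrite zh_swap_param. Qed.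

Lemma grad_comp_involutive (sigma : P -> P) (F : (P -> R) -> R) :
  involutive sigma -> (forall theta, F (theta \o sigma) = F theta) ->
  forall theta p, grad F (theta \o sigma) p = grad F theta (sigma p).
Proof.
move=> sigmaK Finv theta p; rewrite /grad; congr (derive1 _ 0).
apply/funext => r; rewrite -[in RHS]Finv; congr F; apply/funext => q /=.
by rewrite (inj_eq (can_inj sigmaK)).
Qed.

Lemma sgd_swap_param (theta : P -> R) (eta : nat -> R)
    (smp : nat -> inp x0 k * R) n :
  (forall s, (1 <= s <= n)%N -> swap_input (smp s).1 = (smp s).1) ->
  sgd phi (theta \o swap_param) eta smp n = sgd phi theta eta smp n \o swap_param.
Proof.
elim: n => [//|n IH] fixed /=.
rewrite IH; last by move=> s /andP[s1 sn]; apply: fixed; rewrite s1 ltnW.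
apply/funext => p /=; rewrite grad_comp_involutive //; first exact: swap_paramK.
by move=> th; rewrite /sqloss f_mlp_swap_param fixed // leqnn.
Qed.

End InputSwap.

Section Derivability.
Variable R : realType.

Lemma derivable1_comp (f g : R -> R) a :
  derivable f a 1 -> derivable g (f a) 1 -> derivable (g \o f) a 1.
Proof.
move=> /derivable1_diffP df /derivable1_diffP dg; apply/derivable1_diffP.
exact: differentiable_comp.
Qed.

Lemma derivable1_fsum (I : finType) (F : I -> R -> R) a :
  (forall i, derivable (F i) a 1) -> derivable (fun r => \sum_i F i r) a 1.
Proof.
move=> dF; suff dsum s : derivable (fun r => \sum_(i <- s) F i r) a 1 by exact: dsum.
elim: s => [|i s IH].
  by under eq_fun do rewrite big_nil; exact: derivable_cst.
by under eq_fun do rewrite big_cons; exact: derivableD.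
Qed.

Lemma derivable1_measurable_fun (f : R -> R) :
  (forall a, derivable f a 1) -> measurable_fun setT f.
Proof.
move=> df; apply: continuous_measurable_fun => a.
by apply: differentiable_continuous; apply/derivable1_diffP.
Qed.

Lemma derivable1_quotient_cvg (f : R -> R) : derivable f 0 1 ->
  (fun n : nat => n.+1%:R * (f n.+1%:R^-1 - f 0)) @ \oo --> f^`() 0.
Proof.
move=> /cvg_dnbhs_at_right/cvg_at_rightP/(_ (fun n => n.+1%:R^-1)) dquot.
rewrite derive1E; have := dquot (conj (@harmonic_gt0 R) cvg_harmonic).
apply: cvg_trans; apply: near_eq_cvg; apply: nearW => n /=.
by rewrite invrK addr0 [_%:A]mulr1.
Qed.

Variables (X : finType) (x0 : X) (k d L : nat) (phi : R -> R).
Hypothesis phi_derivable : forall u, derivable phi u 1.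
Notation P := (pidx X k d L).

Lemma derivable_zh (theta : P -> R -> R) a :
  (forall q, derivable (theta q) a 1) ->
  forall (x : inp x0 k) n j, derivable (fun r => zh phi (fun q => theta q r) x n j) a 1.
Proof.
move=> dtheta x n; elim: n => [|n IH] j /=.
  apply: (@derivable1_comp (fun r => \sum_c theta _ r * z0 R x c) phi) => //.
  by apply: derivable1_fsum => c; apply: derivableM => //; exact: derivable_cst.
case: (insub n) => [l|]; last exact: derivable_cst.
apply: (@derivable1_comp (fun r => \sum_j' theta _ r * zh phi _ x n j') phi) => //.
by apply: derivable1_fsum => j'; exact: derivableM.
Qed.

Lemma derivable_f_mlp (theta : P -> R -> R) a :
  (forall q, derivable (theta q) a 1) ->
  forall x : inp x0 k, derivable (fun r => f_mlp phi (fun q => theta q r) x) a 1.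
Proof.
move=> dtheta x; apply: derivable1_fsum => j.
by apply: derivableM => //; exact: derivable_zh.
Qed.

Lemma derivable_sqloss_coord (z : inp x0 k * R) (theta : P -> R) p a :
  derivable (fun r => sqloss phi z (fun q => theta q + (if q == p then r else 0))) a 1.
Proof.
have dtheta q : derivable (fun r => theta q + (if q == p then r else 0)) a 1.
  apply: derivableD; first exact: derivable_cst.
  by case: (q == p); [exact: derivable_id | exact: derivable_cst].
have df := derivable_f_mlp (x := z.1) dtheta.
by apply: derivableM; apply: derivableD => //; exact: derivable_cst.
Qed.

End Derivability.

Section Measurability.
Variables (R : realType) (X : finType) (x0 : X) (k d L : nat) (phi : R -> R).
Hypothesis phi_derivable : forall u, derivable phi u 1.
Variables (dT : measure_display) (T : measurableType dT).
Notation P := (pidx X k d L).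

Let measurable_phi := derivable1_measurable_fun phi_derivable.

Lemma measurable_zh (theta : P -> T -> R) :
  (forall q, measurable_fun setT (theta q)) ->
  forall (x : inp x0 k) n j, measurable_fun setT (fun w => zh phi (fun q => theta q w) x n j).
Proof.
move=> mtheta x n; elim: n => [|n IH] j /=.
  apply: measurableT_comp measurable_phi _.
  by apply: measurable_sum => c; apply: measurable_funM.
case: (insub n) => [l|]; last exact: measurable_cst.
apply: measurableT_comp measurable_phi _.
by apply: measurable_sum => j'; exact: measurable_funM.
Qed.

Lemma measurable_f_mlp (theta : P -> T -> R) :
  (forall q, measurable_fun setT (theta q)) ->
  forall x : inp x0 k, measurable_fun setT (fun w => f_mlp phi (fun q => theta q w) x).
Proof.
move=> mtheta x; apply: measurable_sum => j.
by apply: measurable_funM => //; exact: measurable_zh.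
Qed.

Lemma measurable_f_mlp_input (theta : P -> T -> R) (xw : T -> inp x0 k) :
  (forall q, measurable_fun setT (theta q)) -> measurable_fun setT xw ->
  measurable_fun setT (fun w => f_mlp phi (fun q => theta q w) (xw w)).
Proof.
move=> mtheta mxw.
have -> : (fun w => f_mlp phi (fun q => theta q w) (xw w)) =
    (fun w => \sum_x ((xw w == x)%:R * f_mlp phi (fun q => theta q w) x)).
  apply/funext => w; rewrite (bigD1 (xw w)) //= eqxx mul1r big1 ?addr0 // => x xwx.
  by rewrite eq_sym (negPf xwx) mul0r.
apply: measurable_sum => x; apply: measurable_funM; last exact: measurable_f_mlp.
exact: (measurableT_comp (f := fun y : inp x0 k => ((y == x)%:R : R))).
Qed.

Lemma measurable_sqloss (theta : P -> T -> R) (zw : T -> inp x0 k * R) :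
  (forall q, measurable_fun setT (theta q)) -> measurable_fun setT zw ->
  measurable_fun setT (fun w => sqloss phi (zw w) (fun q => theta q w)).
Proof.
move=> mtheta mzw.
have mf := measurable_f_mlp_input mtheta (measurableT_comp measurable_fst mzw).
have my := measurableT_comp measurable_snd mzw.
by apply: measurable_funM; apply: measurable_funB.
Qed.

Variables (eta : nat -> R) (t : nat).

(* The gradient is a pointwise limit of difference quotients along [1/(n+1)]. *)
Lemma measurable_sgd (theta : P -> T -> R) (Z : nat -> T -> inp x0 k * R) :
  (forall q, measurable_fun setT (theta q)) ->
  (forall s, (1 <= s <= t)%N -> measurable_fun setT (Z s)) ->
  forall n, (n <= t)%N -> forall p,
  measurable_fun setT (fun w => sgd phi (fun q => theta q w) eta (fun s => Z s w) n p).
Proof.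
move=> mtheta mZ; elim=> [|n IH] nt p /=; first exact: mtheta.
pose th w := sgd phi (fun q => theta q w) eta (fun s => Z s w) n.
have mth q : measurable_fun setT (th^~ q) by apply: IH; exact: ltnW.
have mZn : measurable_fun setT (Z n.+1) by apply: mZ; rewrite nt.
pose shifted (r : R) w q := th w q + (if q == p then r else 0).
have mshifted r q : measurable_fun setT (shifted r ^~ q).
  by apply: measurable_funD.
have msqloss r : measurable_fun setT (fun w => sqloss phi (Z n.+1 w) (shifted r w)).
  exact: measurable_sqloss (mshifted r) mZn.
apply: measurable_funB; first exact: (mth p).
apply: measurable_funM; first exact: measurable_cst.
apply: (measurable_fun_cvg (h := fun m w => m.+1%:R *
   (sqloss phi (Z n.+1 w) (shifted m.+1%:R^-1 w) - sqloss phi (Z n.+1 w) (shifted 0 w)))).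
  move=> m; apply: measurable_funM => //.
  exact: measurable_funB.
move=> w _; rewrite /grad; apply: derivable1_quotient_cvg.
exact: derivable_sqloss_coord.
Qed.

Lemma measurable_sgd_output (theta : P -> T -> R) (Z : nat -> T -> inp x0 k * R)
    (x : inp x0 k) :
  (forall q, measurable_fun setT (theta q)) ->
  (forall s, (1 <= s <= t)%N -> measurable_fun setT (Z s)) ->
  measurable_fun setT (fun w => f_mlp phi (sgd phi (fun q => theta q w) eta (fun s => Z s w) t) x).
Proof.
move=> mtheta mZ.
by apply: (measurable_f_mlp (theta := fun q w => _)) => q; exact: measurable_sgd.
Qed.

End Measurability.

Section FullProbability.
Variables (d : measure_display) (T : measurableType d) (R : realType).
Variable Pr : probability T R.

Lemma probability_setI_full (A B : set T) :
  measurable A -> measurable B -> Pr A = 1%E -> Pr (B `&` A) = Pr B.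
Proof.
move=> mA mB PA1; rewrite [RHS](measureDI Pr mB mA).
rewrite [X in (X + _)%E](_ : _ = 0%E) ?add0e //.
apply/eqP; rewrite eq_le measure_ge0 andbT.
have : (Pr (B `\` A) <= Pr (~` A))%E.
  by apply: le_measure; rewrite ?inE; [exact: measurableD|exact: measurableC|move=> x []].
by rewrite probability_setC // PA1 subee.
Qed.

Lemma probability_bigcap_full (I : eqType) (F : set I) (A : I -> set T) :
  finite_set F -> (forall i, F i -> measurable (A i)) ->
  (forall i, F i -> Pr (A i) = 1%E) -> Pr (\bigcap_(i in F) A i) = 1%E.
Proof.
move=> /finite_seqP[s ->]; elim: s => [|i s IH] mA PA1.
  rewrite (_ : \bigcap_(j in _) _ = setT) ?probability_setT //.
  by apply/seteqP; split=> // x _ j.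
have sub_s j : [set` s] j -> [set` i :: s] j by rewrite /= in_cons => ->; rewrite orbT.
have -> : \bigcap_(j in [set` i :: s]) A j = (\bigcap_(j in [set` s]) A j) `&` A i.
  apply/seteqP; split => x.
  - by move=> Ax; split => [j /sub_s|]; apply: Ax; rewrite /= ?mem_head.
  - by move=> [Ax Aix] j /=; rewrite in_cons => /orP[/eqP -> //|]; exact: Ax.
rewrite probability_setI_full.
- by apply: IH => j /sub_s; [exact: mA | exact: PA1].
- by apply: mA; rewrite /= mem_head.
- by apply: fin_bigcap_measurable => [|j /sub_s]; [exact: finite_seq | exact: mA].
- by apply: PA1; rewrite /= mem_head.
Qed.

Lemma integral_eq_of_law (f g : T -> R) :
  measurable_fun setT f -> measurable_fun setT g ->
  (forall B, measurable B -> Pr (f @^-1` B) = Pr (g @^-1` B)) ->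
  Pr.-integrable setT (EFin \o f) -> Pr.-integrable setT (EFin \o g) ->
  (\int[Pr]_w (f w)%:E = \int[Pr]_w (g w)%:E)%E.
Proof.
move=> mf mg fg intf intg.
rewrite -(preimage_setT f) in intf; rewrite -(preimage_setT g) in intg.
have pushf := integral_pushforward mf (@EFin_measurable R setT) intf measurableT.
have pushg := integral_pushforward mg (@EFin_measurable R setT) intg measurableT.
rewrite preimage_setT in pushf pushg.
transitivity (\int[distribution Pr (mfun_Sub (mem_set mf))]_y (y%:E))%E; first by rewrite pushf.
transitivity (\int[distribution Pr (mfun_Sub (mem_set mg))]_y (y%:E))%E; last by rewrite pushg.
by apply: eq_measure_integral => B mB _; exact: fg.
Qed.

End FullProbability.

Section SeenTokens.
Variables (R : realType) (X : finType) (x0 : X) (k : nat).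

Definition tokens_in (S : {set X}) : set (inp x0 k * R) :=
  [set z : inp x0 k * R | forall i, z.1 i \in S].

Lemma measurable_tokens_in (S : {set X}) : measurable (tokens_in S).
Proof.
rewrite (_ : tokens_in S = [set x : inp x0 k | forall i, x i \in S] `*` setT).
  exact: measurableX.
by apply/seteqP; split => z /=; [move=> zS; split|case].
Qed.

Lemma probability_tokens_in_seen (D : probability (inp x0 k * R)%type R) :
  D (tokens_in (seen D)) = 1%E.
Proof.
have -> : tokens_in (seen D) = \bigcap_(S in [set S | D (tokens_in S) = 1%E]) tokens_in S.
  apply/seteqP; split => z /=.
  - move=> zS S DS1 i; have := zS i; rewrite inE => /forallP/(_ S)/implyP.
    by apply; apply/eqP.
  - move=> zS i; rewrite inE; apply/forallP => S; apply/implyP => /eqP DS1.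
    exact: zS.
apply: probability_bigcap_full => //; first exact: finite_finset.
by move=> S _; exact: measurable_tokens_in.
Qed.

End SeenTokens.

Section RunLaw.
Variables (R : realType) (dO : measure_display) (Omega : measurableType dO).
Variable Pr : probability Omega R.
Variables (P : finType) (dS : measure_display) (S : measurableType dS).
Variables (theta : P -> Omega -> R) (Z : nat -> Omega -> S) (t : nat).
Hypothesis measurable_theta : forall p, measurable_fun setT (theta p).
Hypothesis measurable_Z : forall s, measurable_fun setT (Z s).
Hypothesis theta_Z_indep : forall (A : P -> set R) (B : nat -> set S),
  (forall p, measurable (A p)) -> (forall s, measurable (B s)) ->
  Pr ((\bigcap_(p in [set: P]) theta p @^-1` A p) `&`
      (\bigcap_(s in [set s | (1 <= s <= t)%N]) Z s @^-1` B s)) =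
  ((\prod_p Pr (theta p @^-1` A p)) * (\prod_(1 <= s < t.+1) Pr (Z s @^-1` B s)))%E.

Definition run_rectangle (A : P -> set R) (B : nat -> set S) : set ((P -> R) * (nat -> S)) :=
  [set y | (forall p, A p (y.1 p)) /\ (forall s, (1 <= s <= t)%N -> B s (y.2 s))].

Definition run_rectangles : set (set ((P -> R) * (nat -> S))) :=
  [set E | exists A B, [/\ forall p, measurable (A p), forall s, measurable (B s)
                         & E = run_rectangle A B]].

Definition run_data := g_sigma_algebraType run_rectangles.

Definition run_of (th : P -> Omega -> R) (w : Omega) : run_data :=
  (fun p => th p w, fun s => Z s w).

Lemma run_rectangles_setI_closed : setI_closed run_rectangles.
Proof.
move=> _ _ [A [B [mA mB ->]]] [A' [B' [mA' mB' ->]]].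
exists (fun p => A p `&` A' p), (fun s => B s `&` B' s); split.
- by move=> p; exact: measurableI.
- by move=> s; exact: measurableI.
apply/seteqP; split => y /=.
- by move=> [[yA yB] [yA' yB']]; split => [p|s st]; split; auto.
- move=> [yA yB]; split; split=> [p|s st].
  all: by [case: (yA p) | case: (yB s st)].
Qed.

Lemma run_rectanglesT : run_rectangles setT.
Proof.
exists (fun _ => setT), (fun _ => setT); split => //.
by apply/seteqP; split.
Qed.

Lemma preimage_run_rectangle (th : P -> Omega -> R) A B :
  run_of th @^-1` run_rectangle A B =
  (\bigcap_(p in [set: P]) th p @^-1` A p) `&`
  (\bigcap_(s in [set s | (1 <= s <= t)%N]) Z s @^-1` B s).
Proof.
apply/seteqP; split => w /= [wA wB].
- by split => [p _|s st]; [exact: wA | exact: wB].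
- by split => [p|s st]; [exact: wA | exact: wB].
Qed.

Lemma measurable_run_of (th : P -> Omega -> R) :
  (forall p, measurable_fun setT (th p)) -> measurable_fun setT (run_of th).
Proof.
move=> mth; apply: (@measurability _ _ _ run_data _ _ run_rectangles) => //.
move=> _ [E [A [B [mA mB ->]]] <-]; rewrite setTI preimage_run_rectangle.
apply: measurableI.
  apply: fin_bigcap_measurable => [|p _]; first exact: finite_finset.
  by rewrite -[X in measurable X]setTI; exact: mth.
apply: bigcap_measurableType => s _.
by rewrite -[X in measurable X]setTI; exact: measurable_Z.
Qed.

Lemma measurable_run_param (q : P) : measurable_fun setT (fun y : run_data => y.1 q).
Proof.
move=> _ Bq mBq; rewrite setTI; apply: sub_sigma_algebra.
exists (fun p => if p == q then Bq else setT), (fun _ => setT); split => //.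
  by move=> p; case: ifP.
apply/seteqP; split => y /=.
- by move=> yB; split => // p; case: eqP => [->|].
- by move=> [yA _]; have := yA q; rewrite eqxx.
Qed.

Lemma measurable_run_sample (s : nat) :
  (1 <= s <= t)%N -> measurable_fun setT (fun y : run_data => y.2 s).
Proof.
move=> st _ Bs mBs; rewrite setTI; apply: sub_sigma_algebra.
exists (fun _ => setT), (fun s' => if s' == s then Bs else setT); split => //.
  by move=> s'; case: ifP.
apply/seteqP; split => y /=.
- by move=> yB; split => // s' _; case: eqP => [->|].
- by move=> [_ yB]; have := yB s st; rewrite eqxx.
Qed.

Variable sigma : P -> P.
Hypothesis sigmaK : involutive sigma.
Hypothesis theta_sigma_law : forall p B, measurable B ->
  Pr (theta (sigma p) @^-1` B) = Pr (theta p @^-1` B).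

(* Both laws are measures agreeing on the pi-system of rectangles, where the
   product formula and the invariance of the marginals under [sigma] apply. *)
Lemma run_law_comp (E : set run_data) : measurable E ->
  Pr (run_of (theta \o sigma) @^-1` E) = Pr (run_of theta @^-1` E).
Proof.
move=> mE.
have mth_sigma p : measurable_fun setT ((theta \o sigma) p) by exact: measurable_theta.
pose m1 := distribution Pr (mfun_Sub (mem_set (measurable_run_of mth_sigma))).
pose m2 := distribution Pr (mfun_Sub (mem_set (measurable_run_of measurable_theta))).
have m12 : forall E, run_rectangles E -> m1 E = m2 E.
  move=> _ [A [B [mA mB ->]]]; rewrite /m1 /m2 /distribution /pushforward /=.
  have -> : run_of (theta \o sigma) @^-1` run_rectangle A B =
      run_of theta @^-1` run_rectangle (A \o sigma) B.
    by apply/seteqP; split => w /= [wA wB]; split => // p;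
      have := wA (sigma p); rewrite /= sigmaK.
  rewrite !preimage_run_rectangle !theta_Z_indep //; last by move=> p; exact: mA.
  congr (_ * _)%E; rewrite [RHS](reindex_inj (can_inj sigmaK)).
  by apply: eq_bigr => p _; rewrite theta_sigma_law.
have m1_fin (n : nat) : (m1 setT < +oo)%E.
  by rewrite /m1 /distribution /pushforward preimage_setT probability_setT ltry.
exact: (@measure_unique _ R run_data run_rectangles (fun _ => setT) erefl run_rectangles_setI_closed
  (fun _ => run_rectanglesT) (bigcup_const _ _) m1 m2 m12 m1_fin E mE).
Qed.

End RunLaw.

Section UnseenInputs.
Variables (R : realType) (X : finType) (x0 : X) (k d L : nat) (phi : R -> R).
Variables (dO : measure_display) (Omega : measurableType dO) (Pr : probability Omega R).
Variable D : probability (inp x0 k * R)%type R.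
Variables (theta0 : pidx X k d L -> Omega -> R) (Z : nat -> Omega -> (inp x0 k * R)%type).
Variables (t : nat) (eta : nat -> R) (x1 x2 : inp x0 k).
Notation P := (pidx X k d L).
Hypothesis phi_derivable : forall u, derivable phi u 1.
Hypothesis measurable_theta0 : forall p, measurable_fun setT (theta0 p).
Hypothesis measurable_Z : forall s, measurable_fun setT (Z s).
Hypothesis theta0_swap_law : forall p B, measurable B ->
  Pr (theta0 (swap_param x1 x2 p) @^-1` B) = Pr (theta0 p @^-1` B).
Hypothesis Z_law : forall s, (1 <= s <= t)%N -> forall B, measurable B ->
  Pr (Z s @^-1` B) = D B.
Hypothesis theta0_Z_indep :
  forall (A : P -> set R) (B : nat -> set (inp x0 k * R)%type),
  (forall p, measurable (A p)) -> (forall s, measurable (B s)) ->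
  Pr ((\bigcap_(p in [set: P]) theta0 p @^-1` A p) `&`
      (\bigcap_(s in [set s | (1 <= s <= t)%N]) Z s @^-1` B s)) =
  ((\prod_p Pr (theta0 p @^-1` A p)) * (\prod_(1 <= s < t.+1) Pr (Z s @^-1` B s)))%E.
Hypothesis x1_unseen : forall i, x1 i \notin seen D.
Hypothesis x2_unseen : forall i, x2 i \notin seen D.

Let output (x : inp x0 k) (w : Omega) : R :=
  f_mlp phi (sgd phi (fun p => theta0 p w) eta (fun s => Z s w) t) x.

Let output_x2 (y : run_data R P (inp x0 k * R)%type t) : R :=
  f_mlp phi (sgd phi y.1 eta y.2 t) x2.

Definition samples_seen : set Omega :=
  \bigcap_(s in [set s | (1 <= s <= t)%N]) Z s @^-1` tokens_in (seen D).

Lemma probability_samples_seen : Pr samples_seen = 1%E.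
Proof.
have := theta0_Z_indep (A := fun _ => setT) (B := fun _ => tokens_in (seen D))
  (fun _ => measurableT) (fun _ => measurable_tokens_in _).
rewrite (_ : \bigcap_(p in [set: P]) theta0 p @^-1` setT = setT); last first.
  by apply/seteqP; split.
rewrite setTI => ->; rewrite big1 ?mul1e; last first.
  by move=> p _; rewrite preimage_setT probability_setT.
rewrite (@eq_big_nat _ _ _ _ _ _ (fun _ => 1%E)) ?big1 // => s /andP[s1 st].
rewrite Z_law ?probability_tokens_in_seen //; last exact: measurable_tokens_in.
by rewrite s1 -ltnS.
Qed.

Lemma output_x1_swap w : samples_seen w ->
  output x1 w = output_x2 (run_of Z t (theta0 \o swap_param x1 x2) w).
Proof.
move=> seen_w.
have fixed s : (1 <= s <= t)%N -> swap_input x1 x2 (Z s w).1 = (Z s w).1.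
  move=> st; apply: swap_input_id => i; apply/eqP => tok_eq; have := seen_w s st i;
    rewrite /= -tok_eq; [apply/negP; exact: x1_unseen | apply/negP; exact: x2_unseen].
rewrite /output_x2 /= -[fun p => theta0 _ w]/((fun p => theta0 p w) \o swap_param x1 x2).
by rewrite sgd_swap_param // f_mlp_swap_param swap_input_x2.
Qed.

Lemma unseen_outputs_same_law B : measurable B ->
  Pr (output x1 @^-1` B) = Pr (output x2 @^-1` B).
Proof.
move=> mB.
have mseen : measurable samples_seen.
  apply: bigcap_measurableType => s _.
  by rewrite -[X in measurable X]setTI; apply: measurable_Z => //; exact: measurable_tokens_in.
have moutput_x2 : measurable_fun setT output_x2.
  apply: measurable_sgd_output => //; first exact: measurable_run_param.
  exact: measurable_run_sample.
have mpre (f : Omega -> R) : measurable_fun setT f -> measurable (f @^-1` B).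
  by move=> mf; rewrite -[X in measurable X]setTI; exact: mf.
have mout1 : measurable (output x1 @^-1` B) := mpre _ (measurable_sgd_output phi_derivable eta (t := t) x1 measurable_theta0
  (fun s _ => measurable_Z s)).
have mswap : measurable ((output_x2 \o run_of Z t (theta0 \o swap_param x1 x2)) @^-1` B).
  apply/mpre/(measurableT_comp moutput_x2).
  by apply: measurable_run_of => // p; exact: measurable_theta0.
rewrite -(probability_setI_full mseen mout1 probability_samples_seen).
rewrite (_ : _ `&` _ = (output_x2 \o run_of Z t (theta0 \o swap_param x1 x2)) @^-1` B
    `&` samples_seen); last first.
  apply/seteqP; split => w [Bw seen_w]; split => //; move: Bw;
    by have := output_x1_swap seen_w; rewrite /preimage /= => ->.
rewrite (probability_setI_full mseen mswap probability_samples_seen) comp_preimage.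
rewrite (run_law_comp measurable_theta0 measurable_Z theta0_Z_indep (@swap_paramK _ _ _ d L x1 x2)
  theta0_swap_law) //.
by rewrite -[X in measurable X]setTI; exact: moutput_x2.
Qed.

End UnseenInputs.

Theorem mainTheorem15
  (R : realType) (X : finType) (x0 : X) (k d L : nat) (phi : R -> R)
  (dO : measure_display) (Omega : measurableType dO)
  (Pr : probability Omega R)
  (D : probability (inp x0 k * R)%type R)
  (mu1 : R) (muh : 'I_L.-1 -> R) (muw : R)
  (sd1 : R) (sdh : 'I_L.-1 -> R) (sdw : R)
  (theta0 : pidx X k d L -> Omega -> R)
  (Z : nat -> Omega -> (inp x0 k * R)%type)
  (t : nat) (eta : nat -> R) (x1 x2 : inp x0 k) :
  (1 <= L)%N ->
  (forall u, derivable phi u 1) ->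
  (forall p, @blockwise R X k d L sd1 sdh sdw p != 0) ->
  (forall p, measurable_fun setT (theta0 p)) ->
  (forall s, measurable_fun setT (Z s)) ->
  (forall p (B : set R), measurable B ->
     Pr (theta0 p @^-1` B) =
     normal_prob (@blockwise R X k d L mu1 muh muw p) (@blockwise R X k d L sd1 sdh sdw p) B) ->
  (forall s, (1 <= s <= t)%N -> forall B : set (inp x0 k * R)%type,
     measurable B -> Pr (Z s @^-1` B) = D B) ->
  (forall (A : pidx X k d L -> set R) (B : nat -> set (inp x0 k * R)%type),
     (forall p, measurable (A p)) -> (forall s, measurable (B s)) ->
     Pr ((\bigcap_(p in [set: pidx X k d L]) theta0 p @^-1` A p) `&`
         (\bigcap_(s in [set s | (1 <= s <= t)%N]) Z s @^-1` B s)) =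
     ((\prod_(p : pidx X k d L) Pr (theta0 p @^-1` A p)) *
      (\prod_(1 <= s < t.+1) Pr (Z s @^-1` B s)))%E) ->
  (forall s, (1 <= s <= t)%N -> 0 < eta s) ->
  (forall i, x1 i \notin seen D) ->
  (forall i, x2 i \notin seen D) ->
  let out x := fun w : Omega =>
    @f_mlp R X x0 k d L phi (@sgd R X x0 k d L phi (fun p => theta0 p w) eta (fun s => Z s w) t) x in
  (forall B : set R, measurable B ->
     Pr (out x1 @^-1` B) = Pr (out x2 @^-1` B)) /\
  (Pr.-integrable setT (EFin \o out x1) ->
   Pr.-integrable setT (EFin \o out x2) ->
   (\int[Pr]_w (out x1 w)%:E = \int[Pr]_w (out x2 w)%:E)%E).
Proof.
move=> _ phi_derivable _ mtheta0 mZ theta0_normal Z_law indep _ x1_unseen x2_unseen out.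
have theta0_swap_law p B : measurable B ->
    Pr (theta0 (swap_param x1 x2 p) @^-1` B) = Pr (theta0 p @^-1` B).
  by move=> mB; rewrite !theta0_normal // !blockwise_swap_param.
have same_law := unseen_outputs_same_law eta phi_derivable mtheta0 mZ theta0_swap_law Z_law indep
  x1_unseen x2_unseen.
split=> //; apply: integral_eq_of_law => //; exact: measurable_sgd_output.
Qed.
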